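(* Let $A\subset\mathcal{N}=\omega^\omega$, let $\mathcal{F}=\mathcal{F}_A$ be the family of all closed and discrete subsets of $A$, let $\{T_a : a\in A\}$ be an $(A,\mathcal{F})$-Reznichenko family of trees and $\mathcal{T}=\bigcup_{a\in A}T_a$. Let $\{U_n\}_{n<\omega}$ be a disjoint family of open subsets of $A$ whose union is closed in $A$, and let $\mathcal{T}=\bigcup_{n<\omega}D_n$. Then there exists $n<\omega$ such that $D_n\cap T_a$ is successively dense in the tree $T_a$ for every $a\in U_n$.
   Context: A tree is a partially ordered set $(T,\leq)$ in which for each $t$ the set $\{s: s<t\}$ is well ordered and which has a minimum, the root. An immediate successor of $t$ is a node $s>t$ with no $r$ satisfying $t<r<s$. The height is the least ordinal $\alpha$ such that no node has predecessor set of order type $\alpha$. A segment is a set $S\subset T$ of pairwise comparable elements such that $t\leq r\leq s$ with $t,s\in S$ implies $r\in S$; it is initial if it contains the root. For a set $A$ with $|A|\leq\mathfrak{c}$ and a hereditary family $\mathcal{F}$ of subsets of $A$, an $(A,\mathcal{F})$-Reznichenko family of trees is a family $\{T_a:a\in A\}$ of trees such that: (1) each $T_a$ has height $\omega$ and every node has $\mathfrak{c}$ many immediate successors; (2) $T_a\cap A=\{a\}$ and $a$ is the root of $T_a$; (3) for every $t\in\bigcup_a T_a$, $\{a\in A: t\in T_a\}\in\mathcal{F}$; (4) for $a\neq b$ and segments $S\subset T_a$, $S'\subset T_b$, $|S\cap S'|\leq 1$; (5) for every $B\in\mathcal{F}$ and every disjoint family $\{S_b:b\in B\}$ with $S_b$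 a finite initial segment of $T_b$, there are $\mathfrak{c}$ many $t$ that are simultaneously an immediate successor of $S_b$ in $T_b$ for all $b\in B$. A subset $D$ of a tree $T$ is successively dense if there is a countable family $R$ of immediate successors of the root such that every $t\in T$ incomparable with every element of $R$ has an immediate successor in $D$. *)

From Stdlib Require Import List Arith.
Import ListNotations.

Set Implicit Arguments.

Definition baire := nat -> nat.

Definition agree (n : nat) (x y : baire) : Prop := forall i, i < n -> x i = y i.

Definition rel_open (A U : baire -> Prop) : Prop :=
  (forall x, U x -> A x) /\
  (forall x, U x -> exists n, forall y, A y -> agree n x y -> U y).

Definition rel_closed (A C : baire -> Prop) : Prop :=
  (forall x, C x -> A x) /\ rel_open A (fun x => A x /\ ~ C x).

Definition rel_discrete (B : baire -> Prop) : Prop :=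
  forall x, B x -> exists n, forall y, B y -> agree n x y -> y = x.

Definition closed_discrete (A : baire -> Prop) (B : baire -> Prop) : Prop :=
  rel_closed A B /\ rel_discrete B.

Definition finite_set {X : Type} (P : X -> Prop) : Prop :=
  exists l : list X, forall x, P x -> In x l.

Definition has_size {X : Type} (P : X -> Prop) (n : nat) : Prop :=
  exists l : list X, NoDup l /\ length l = n /\ forall x, P x <-> In x l.

Definition countable_set {X : Type} (P : X -> Prop) : Prop :=
  exists g : X -> nat, forall x y, P x -> P y -> g x = g y -> x = y.

Definition card_c {X : Type} (P : X -> Prop) : Prop :=
  exists f : (nat -> bool) -> X,
    (forall z, P (f z)) /\ (forall z w, f z = f w -> z = w) /\
    (forall x, P x -> exists z, f z = x).

Section Trees.
Variable X : Type.
Variable T : X -> Prop.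
Variable le : X -> X -> Prop.

Definition lt (x y : X) : Prop := le x y /\ x <> y.

Definition is_root (r : X) : Prop := T r /\ forall t, T t -> le r t.

Definition preds (t : X) : X -> Prop := fun s => T s /\ lt s t.

Definition is_tree : Prop :=
  (forall x, T x -> le x x) /\
  (forall x y, T x -> T y -> le x y -> le y x -> x = y) /\
  (forall x y z, T x -> T y -> T z -> le x y -> le y z -> le x z) /\
  (exists r, is_root r) /\
  (forall t, T t ->
     (forall x y, preds t x -> preds t y -> le x y \/ le y x) /\
     (forall Q : X -> Prop, (forall x, Q x -> preds t x) -> (exists x, Q x) ->
        exists m, Q m /\ forall x, Q x -> le m x)).

(* height omega: every n < omega is the order type of some predecessor set,
   and no predecessor set has order type >= omega (i.e. all are finite) *)
Definition height_omega : Prop :=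
  (forall t, T t -> finite_set (preds t)) /\
  (forall n, exists t, T t /\ has_size (preds t) n).

Definition imm_succ (t s : X) : Prop :=
  T s /\ lt t s /\ ~ (exists r, T r /\ lt t r /\ lt r s).

Definition segment (S : X -> Prop) : Prop :=
  (forall x, S x -> T x) /\
  (forall x y, S x -> S y -> le x y \/ le y x) /\
  (forall t r s, S t -> S s -> T r -> le t r -> le r s -> S r).

Definition initial_segment (S : X -> Prop) : Prop :=
  segment S /\ exists r, is_root r /\ S r.

Definition imm_succ_seg (S : X -> Prop) (t : X) : Prop :=
  exists m, S m /\ (forall s, S s -> le s m) /\ imm_succ m t.

Definition succ_dense (D : X -> Prop) : Prop :=
  exists R : X -> Prop,
    countable_set R /\
    (exists r, is_root r /\ forall x, R x -> imm_succ r x) /\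
    (forall t, T t -> (forall x, R x -> ~ le t x /\ ~ le x t) ->
       exists s, imm_succ t s /\ D s).
End Trees.

Definition bigT {X : Type} (A : baire -> Prop) (T : baire -> X -> Prop) : X -> Prop :=
  fun t => exists a, A a /\ T a t.

(* (A,F)-Reznichenko family of trees {T_a : a in A}; the trees live in a
   common universe X, into which the points of A embed via emb;
   tree T_a carries its own order le a. *)
Definition reznichenko (X : Type) (emb : baire -> X) (A : baire -> Prop)
  (F : (baire -> Prop) -> Prop) (T : baire -> X -> Prop) (le : baire -> X -> X -> Prop) : Prop :=
  (forall a, A a ->
     is_tree (T a) (le a) /\ height_omega (T a) (le a) /\
     forall t, T a t -> card_c (imm_succ (T a) (le a) t)) /\
  (forall a, A a ->
     T a (emb a) /\ is_root (T a) (le a) (emb a) /\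
     forall b, A b -> T a (emb b) -> b = a) /\
  (forall t, bigT A T t -> F (fun a => A a /\ T a t)) /\
  (forall a b, A a -> A b -> a <> b ->
     forall S S', segment (T a) (le a) S -> segment (T b) (le b) S' ->
     forall x y, S x -> S' x -> S y -> S' y -> x = y) /\
  (forall B, F B -> forall Sf : baire -> X -> Prop,
     (forall b, B b -> finite_set (Sf b) /\ initial_segment (T b) (le b) (Sf b)) ->
     (forall b b' x, B b -> B b' -> b <> b' -> Sf b x -> Sf b' x -> False) ->
     card_c (fun t => bigT A T t /\
                      forall b, B b -> imm_succ_seg (T b) (le b) (Sf b) t)).

From Stdlib Require Import List Arith Lia Classical ClassicalEpsilon
  FunctionalExtensionality PropExtensionality.
Import ListNotations.

(* Suppose not, and pick a_n in U_n such that D_n is not successively dense in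
   T_{a_n}.  The points a_n form a closed discrete subset of A: each U_n is open
   and meets the set only in a_n, and the union of the U_n is closed.  Recursively
   choose nodes t_n of T_{a_n} without immediate successor in D_n, each one
   incomparable with every first-level node of T_{a_n} lying below a node of an
   earlier branch [root, t_m]; this makes the branches pairwise disjoint.
   Condition (5) then yields a node s that immediately succeeds every t_n; s lies
   in some D_m, contradicting the choice of t_m. *)

Lemma range_closed_discrete {A : baire -> Prop} {U : nat -> baire -> Prop}
  {a : nat -> baire} :
  (forall n, rel_open A (U n)) ->
  (forall n m x, U n x -> U m x -> n = m) ->
  rel_closed A (fun x => exists n, U n x) ->
  (forall n, U n (a n)) ->
  closed_discrete A (fun b => exists n, b = a n).
Proof.
  intros Uopen Udisj Uclosed aU.
  assert (aA : forall n, A (a n)) by (intro n; exact (proj1 (Uopen n) _ (aU n))).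
  assert (U_a : forall n j, U n (a j) -> j = n) by (intros n j; apply Udisj, aU).
  split; [split|].
  - intros x [n ->]. apply aA.
  - split; [intros x [Ax _]; exact Ax|].
    intros x [Ax notrange]. destruct (classic (exists n, U n x)) as [[m Um]|notU].
    + destruct (proj2 (Uopen m) x Um) as [k Hk].
      assert (Hi : exists i, x i <> a m i).
      { apply NNPP; intro Hc. apply notrange. exists m. apply functional_extensionality.
        intro i. apply NNPP. intro h. apply Hc. exists i. exact h. }
      destruct Hi as [i Hi]. exists (k + S i). intros y Ay Hag. split; [exact Ay|].
      intros [j ->].
      assert (j = m) as -> by (apply (U_a m), Hk; [exact Ay | intros i' Hi'; apply Hag; lia]).
      apply Hi, Hag. lia.
    + destruct (proj2 (proj2 Uclosed) x (conj Ax notU)) as [k Hk].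
      exists k. intros y Ay Hag. split; [exact Ay|]. intros [j ->].
      apply (proj2 (Hk _ Ay Hag)). exists j. apply aU.
  - intros x [n ->]. destruct (proj2 (Uopen n) (a n) (aU n)) as [k Hk].
    exists k. intros y [j ->] Hag.
    rewrite (U_a n j (Hk _ (aA j) Hag)). reflexivity.
Qed.

Lemma countable_of_list_cover {X : Type} (K : list X) (Rel : X -> X -> Prop)
  (R : X -> Prop) :
  (forall x, R x -> exists y, In y K /\ Rel x y) ->
  (forall x x' y, R x -> R x' -> Rel x y -> Rel x' y -> x = x') ->
  countable_set R.
Proof.
  intros cover uniq.
  set (index x := epsilon (inhabits 0) (fun j => exists y, nth_error K j = Some y /\ Rel x y)).
  assert (index_spec : forall x, R x -> exists y, nth_error K (index x) = Some y /\ Rel x y).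
  { intros x Rx. apply (epsilon_spec (inhabits 0)).
    destruct (cover x Rx) as [y [Ky Rxy]]. destruct (In_nth_error _ _ Ky) as [j Hj].
    exists j, y. auto. }
  exists index. intros x x' Rx Rx' e.
  destruct (index_spec x Rx) as [y [Hy Rxy]].
  destruct (index_spec x' Rx') as [y' [Hy' Rxy']].
  rewrite e, Hy' in Hy. injection Hy as ->.
  exact (uniq x x' y Rx Rx' Rxy Rxy').
Qed.

Section Trees.
Context {X : Type} {T : X -> Prop} {le : X -> X -> Prop}.
Hypothesis tree : is_tree T le.

Definition down_set (t : X) : X -> Prop := fun y => T y /\ le y t.

Definition first_nodes_below (r : X) (K : list X) : X -> Prop :=
  fun x => imm_succ T le r x /\ exists y, In y K /\ T y /\ le x y.

Lemma le_total_below {t x y} : T t -> down_set t x -> down_set t y -> le x y \/ le y x.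
Proof.
  destruct tree as [_ [_ [_ [_ wo]]]].
  intros Tt [Tx lxt] [Ty lyt].
  destruct (classic (x = t)) as [->|nx]; [right; exact lyt|].
  destruct (classic (y = t)) as [->|ny]; [left; exact lxt|].
  apply (proj1 (wo t Tt)); repeat split; auto.
Qed.

(* The first-level node below y is the least element of the well-ordered set of
   predecessors of y strictly above the root. *)
Lemma imm_succ_root_below {r y} : is_root T le r -> T y -> y <> r ->
  exists f, imm_succ T le r f /\ le f y.
Proof.
  destruct tree as [refl [anti [trans [_ wo]]]].
  intros [_ root] Ty ne.
  destruct (classic (exists s, preds T le y s /\ lt le r s)) as [above|none].
  - destruct (proj2 (wo y Ty) (fun s => preds T le y s /\ lt le r s)
       (fun x H => proj1 H) above) as [f [[[Tf [lfy nfy]] lrf] least]].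
    exists f. split; [|exact lfy]. split; [exact Tf|]. split; [exact lrf|].
    intros [z [Tz [lrz [lzf nzf]]]].
    apply nzf, anti; auto. apply least.
    split; [split; [exact Tz | split] | exact lrz].
    + exact (trans z f y Tz Tf Ty lzf lfy).
    + intros ->. apply nfy, anti; auto.
  - exists y. split; [|apply refl, Ty].
    split; [exact Ty|]. split; [split; [apply root, Ty | intros ->; apply ne, eq_refl]|].
    intros [z [Tz [lrz [lzy nzy]]]]. apply none. exists z.
    split; [split; [exact Tz | split; assumption] | exact lrz].
Qed.

Lemma imm_succ_root_below_unique {r y f f'} : T y ->
  imm_succ T le r f -> imm_succ T le r f' -> le f y -> le f' y -> f = f'.
Proof.
  intros Ty Hf Hf' lfy lfy'.
  pose proof Hf as [Tf [lrf nf]]. pose proof Hf' as [Tf' [lrf' nf']].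
  destruct (classic (f = f')) as [e|ne]; [exact e|exfalso].
  destruct (le_total_below Ty (conj Tf lfy) (conj Tf' lfy')) as [l|l].
  - apply nf'. exists f. split; [exact Tf|]. split; [exact lrf|]. split; [exact l|exact ne].
  - apply nf. exists f'. split; [exact Tf'|]. split; [exact lrf'|].
    split; [exact l|intros ->; apply ne, eq_refl].
Qed.

Lemma first_nodes_below_countable r K : countable_set (first_nodes_below r K).
Proof.
  apply (countable_of_list_cover K (fun x y => T y /\ le x y)).
  - intros x [_ H]. exact H.
  - intros x x' y [Hx _] [Hx' _] [Ty l] [_ l'].
    exact (imm_succ_root_below_unique Ty Hx Hx' l l').
Qed.

(* If D is not successively dense, the countable set of first-level nodes below
   the nodes of K is no witness of density. *)
Lemma not_succ_dense_avoid {r} {D : X -> Prop} (K : list X) :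
  is_root T le r -> ~ succ_dense T le D ->
  exists t, T t /\
    (forall x, first_nodes_below r K x -> ~ le t x /\ ~ le x t) /\
    ~ (exists s, imm_succ T le t s /\ D s).
Proof.
  intros Hr not_dense. apply NNPP; intro none. apply not_dense.
  exists (first_nodes_below r K). split; [apply first_nodes_below_countable|]. split.
  - exists r. split; [exact Hr|]. intros x [Hx _]; exact Hx.
  - intros t Tt incomparable. apply NNPP; intro no_succ. apply none. eauto.
Qed.

Lemma down_set_initial_segment {r t} : is_root T le r -> T t ->
  initial_segment T le (down_set t).
Proof.
  destruct tree as [_ [_ [trans _]]].
  intros Hr Tt. split; [split; [|split]|].
  - intros x [Tx _]. exact Tx.
  - intros x y Sx Sy. exact (le_total_below Tt Sx Sy).
  - intros x z y _ [Ty ly] Tz _ lzy. split; [exact Tz|]. exact (trans z y t Tz Ty Tt lzy ly).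
  - exists r. split; [exact Hr|]. split; [apply Hr|apply (proj2 Hr), Tt].
Qed.

Lemma down_set_in_cons {t L y} : (forall z, preds T le t z -> In z L) ->
  down_set t y -> In y (t :: L).
Proof.
  intros cover [Ty lyt].
  destruct (classic (y = t)) as [->|ne]; [left; reflexivity|].
  right. apply cover. repeat split; auto.
Qed.

Lemma imm_succ_seg_down_set {t s} : T t ->
  imm_succ_seg T le (down_set t) s -> imm_succ T le t s.
Proof.
  destruct tree as [refl [anti _]].
  intros Tt [m [[Tm lmt] [greatest Hs]]].
  replace t with m; [exact Hs|]. apply anti; auto. apply greatest. split; auto.
Qed.
End Trees.

Arguments down_set {X} T le t y.
Arguments first_nodes_below {X} T le r K x.

Section DisjointBranches.
Variables (X : Type) (T : nat -> X -> Prop) (le : nat -> X -> X -> Prop).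
Variables (root : nat -> X) (D : nat -> X -> Prop).
Hypothesis tree : forall n, is_tree (T n) (le n).
Hypothesis root_root : forall n, is_root (T n) (le n) (root n).
Hypothesis preds_finite : forall n t, T n t -> finite_set (preds (T n) (le n) t).
Hypothesis root_separated : forall m n, T m (root n) -> m = n.
Hypothesis not_dense : forall n, ~ succ_dense (T n) (le n) (D n).

Definition avoiding (n : nat) (K : list X) (t : X) : Prop :=
  T n t /\
  (forall x, first_nodes_below (T n) (le n) (root n) K x -> ~ le n t x /\ ~ le n x t) /\
  ~ (exists s, imm_succ (T n) (le n) t s /\ D n s).

Section Construction.
Variable pick : nat -> list X -> X.
Hypothesis pick_avoiding : forall n K, avoiding n K (pick n K).
Variable cover : nat -> X -> list X.
Hypothesis cover_preds : forall {n t}, T n t ->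
  forall z, preds (T n) (le n) t z -> In z (cover n t).

(* visited n lists every node of the branches [root, t_m] for m < n. *)
Fixpoint visited (n : nat) : list X :=
  match n with
  | 0 => []
  | S k => visited k ++ pick k (visited k) :: cover k (pick k (visited k))
  end.

Definition branch (n : nat) : X := pick n (visited n).

Lemma visited_mono {m n y} : m <= n -> In y (visited m) -> In y (visited n).
Proof.
  intros mn Hy. induction mn as [|n _ IH]; [exact Hy|].
  cbn. apply in_or_app. left. exact IH.
Qed.

Lemma down_set_branch_visited {m n y} : m < n ->
  down_set (T m) (le m) (branch m) y -> In y (visited n).
Proof.
  intros mn Sy. apply (visited_mono mn). cbn. apply in_or_app. right.
  exact (down_set_in_cons (cover_preds (proj1 (pick_avoiding m (visited m)))) Sy).
Qed.

Lemma branches_disjoint {m n x} : m < n ->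
  down_set (T m) (le m) (branch m) x -> down_set (T n) (le n) (branch n) x -> False.
Proof.
  intros mn Sm [Tx lx].
  assert (not_root : x <> root n).
  { intros ->. apply (Nat.lt_neq _ _ mn), root_separated, (proj1 Sm). }
  destruct (imm_succ_root_below (tree n) (root_root n) Tx not_root) as [f [Hf lfx]].
  destruct (pick_avoiding n (visited n)) as [Tb [incomparable _]].
  apply (incomparable f).
  - split; [exact Hf|]. exists x. split; [exact (down_set_branch_visited mn Sm)|].
    split; [exact Tx|exact lfx].
  - destruct (tree n) as [_ [_ [trans _]]].
    exact (trans f x (branch n) (proj1 Hf) Tx Tb lfx lx).
Qed.
End Construction.

Lemma disjoint_branches_avoiding : exists t : nat -> X,
  (forall n, T n (t n) /\ ~ (exists s, imm_succ (T n) (le n) (t n) s /\ D n s)) /\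
  (forall m n x, m <> n ->
     down_set (T m) (le m) (t m) x -> down_set (T n) (le n) (t n) x -> False).
Proof.
  destruct (choice (fun (p : nat * list X) t => avoiding (fst p) (snd p) t)) as [pick Hpick].
  { intros [n K]. exact (not_succ_dense_avoid (tree n) K (root_root n) (not_dense n)). }
  destruct (choice (fun (p : nat * X) L => T (fst p) (snd p) ->
      forall z, preds (T (fst p)) (le (fst p)) (snd p) z -> In z L)) as [cover Hcover].
  { intros [n t]. destruct (classic (T n t)) as [Tt|nTt].
    - destruct (preds_finite n t Tt) as [L HL]. exists L. intros _. exact HL.
    - exists []. intro Tt. contradiction. }
  set (pick' n K := pick (n, K)). set (cover' n t := cover (n, t)).
  assert (pick'_avoiding : forall n K, avoiding n K (pick' n K)) by (intros n K; apply (Hpick (n, K))).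
  assert (cover'_preds : forall n t, T n t -> forall z, preds (T n) (le n) t z -> In z (cover' n t))
    by (intros n t; apply (Hcover (n, t))).
  exists (branch pick' cover'). split.
  - intro n. destruct (pick'_avoiding n (visited pick' cover' n)) as [Tb [_ no_succ]]. auto.
  - intros m n x ne Sm Sn. destruct (Nat.lt_gt_cases m n) as [[lt|gt] _]; [exact ne| |].
    + exact (branches_disjoint pick' pick'_avoiding cover' cover'_preds lt Sm Sn).
    + exact (branches_disjoint pick' pick'_avoiding cover' cover'_preds gt Sn Sm).
Qed.
End DisjointBranches.

Lemma reznichenko_common_successor {X : Type} {emb : baire -> X}
  {A : baire -> Prop} {T : baire -> X -> Prop} {le : baire -> X -> X -> Prop}
  {a : nat -> baire} {t : nat -> X} :
  reznichenko emb A (closed_discrete A) T le ->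
  (forall n, A (a n)) -> (forall m n, a m = a n -> m = n) ->
  closed_discrete A (fun b => exists n, b = a n) ->
  (forall n, T (a n) (t n)) ->
  (forall m n x, m <> n ->
     down_set (T (a m)) (le (a m)) (t m) x -> down_set (T (a n)) (le (a n)) (t n) x -> False) ->
  exists s, bigT A T s /\ forall n, imm_succ (T (a n)) (le (a n)) (t n) s.
Proof.
  intros [Htree [Hroot [_ [_ Hsucc]]]] aA a_inj Hcd Tt disjoint.
  set (Sf b x := exists n, b = a n /\ down_set (T (a n)) (le (a n)) (t n) x).
  assert (SfE : forall n, Sf (a n) = down_set (T (a n)) (le (a n)) (t n)).
  { intro n. apply functional_extensionality. intro x.
    apply propositional_extensionality. split.
    - intros [n' [e Sx]]. apply a_inj in e. subst n'. exact Sx.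
    - intro Sx. exists n. auto. }
  destruct (Hsucc _ Hcd Sf) as [f [Hf _]].
  - intros b [n ->]. rewrite SfE.
    destruct (Htree _ (aA n)) as [tree [[finite _] _]]. split.
    + destruct (finite _ (Tt n)) as [L HL]. exists (t n :: L). intros x Sx.
      exact (down_set_in_cons HL Sx).
    + exact (down_set_initial_segment tree (proj1 (proj2 (Hroot _ (aA n)))) (Tt n)).
  - intros b b' x [n ->] [n' ->] ne. rewrite !SfE.
    apply disjoint. intros ->. apply ne, eq_refl.
  - destruct (Hf (fun _ => true)) as [Hs Hall]. exists (f (fun _ => true)).
    split; [exact Hs|]. intro n.
    specialize (Hall (a n) (ex_intro _ n eq_refl)). rewrite SfE in Hall.
    exact (imm_succ_seg_down_set (proj1 (Htree _ (aA n))) (Tt n) Hall).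
Qed.

Theorem lemma4p3 (X : Type) (emb : baire -> X)
  (Hemb : forall x y, emb x = emb y -> x = y)
  (A : baire -> Prop) (T : baire -> X -> Prop) (le : baire -> X -> X -> Prop)
  (HR : reznichenko emb A (closed_discrete A) T le)
  (U : nat -> baire -> Prop)
  (HUo : forall n, rel_open A (U n))
  (HUd : forall n m x, U n x -> U m x -> n = m)
  (HUc : rel_closed A (fun x => exists n, U n x))
  (D : nat -> X -> Prop)
  (HD : forall x, bigT A T x <-> exists n, D n x) :
  exists n, forall a, U n a ->
    succ_dense (T a) (le a) (fun x => D n x /\ T a x).
Proof.
  apply NNPP; intro fails.
  destruct (choice (fun n a => U n a /\ ~ succ_dense (T a) (le a) (fun x => D n x /\ T a x)))
    as [a Ha].
  { intro n. apply NNPP; intro none. apply fails. exists n. intros a Ua.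
    apply NNPP. intro nd. apply none. eauto. }
  assert (aA : forall n, A (a n)) by (intro n; exact (proj1 (HUo n) _ (proj1 (Ha n)))).
  assert (a_inj : forall m n, a m = a n -> m = n)
    by (intros m n e; apply (HUd m n (a m)); [|rewrite e]; apply Ha).
  pose proof HR as [Htree [Hroot _]].
  destruct (disjoint_branches_avoiding X (fun n => T (a n)) (fun n => le (a n))
    (fun n => emb (a n)) (fun n x => D n x /\ T (a n) x)) as [t [Ht disjoint]].
  - intro n. exact (proj1 (Htree _ (aA n))).
  - intro n. exact (proj1 (proj2 (Hroot _ (aA n)))).
  - intros n s Ts. exact (proj1 (proj1 (proj2 (Htree _ (aA n)))) s Ts).
  - intros m n Tm. symmetry. apply a_inj, (proj2 (proj2 (Hroot _ (aA m)))); [apply aA | exact Tm].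
  - intro n. apply Ha.
  - destruct (reznichenko_common_successor HR aA a_inj
      (range_closed_discrete HUo HUd HUc (fun n => proj1 (Ha n))) (fun n => proj1 (Ht n)) disjoint)
      as [s [Ts Hs]].
    destruct (proj1 (HD s) Ts) as [m Dm].
    apply (proj2 (Ht m)). exists s. split; [apply Hs|]. split; [exact Dm|apply Hs].
Qed.
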